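(* Let $\theta$ be a random variable with a continuous distribution, let $u(q,\theta)$ be a utility function, monotone increasing in $q$, with $\partial^2u(q,\theta)/\partial q^2=-1/d$ for all $(q,\theta)$, where $d>0$, and let the penalty be a quadratic function $\phi$ with $\phi(0)=\phi'(0)=0$, symmetric, and $\phi''(x)=1/\lambda$ for all $x$, where $\lambda>0$. Let $\pi_0>0$, $\pi_2>0$, $p\in(0,1)$. Define $q^a(\theta)=\arg\min_q\{\pi_0 q-u(q,\theta)\}$, $q^b(f,\theta)=\arg\min_q\{\pi_0 q-u(q,\theta)+\phi(f-q)\}$, $q^c(\theta)=\arg\min_q\{\pi_0 q-u(q,\theta)-\pi_2(f-q)\}$, $$H(f)=p\,\mathbb{E}_\theta[\pi_0 q^c-u(q^c,\theta)-\pi_2(f-q^c)]+(1-p)\,\mathbb{E}_\theta[\pi_0 q^b-u(q^b,\theta)+\phi(f-q^b)],$$ and let $f^*$ be the minimizer of $H$. Then the expected inflation of the baseline report is $$\mathbb{E}_\theta\,\delta f^*(p)=f^*-\mathbb{E}_\theta q^a(\theta)=(d+\lambda)\frac{p\,\pi_2}{1-p}.$$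
   Context: A consumer in a demand response program self-reports baseline $f$; with probability $p$ it is called and paid $\pi_2$ per unit of reduction $f-q$, otherwise it pays penalty $\phi(f-q)$. $\pi_0$ is the retail price; $q^a(\theta)$ is the consumption when not participating (the true baseline), and $\delta f^*(\theta)=f^*-q^a(\theta)$ is the baseline inflation. *)

From HB Require Import structures.
From mathcomp Require Import all_boot all_order all_algebra.
From mathcomp Require Import all_classical all_reals all_analysis.
Set Implicit Arguments. Unset Strict Implicit. Unset Printing Implicit Defensive.
Import Order.TTheory GRing.Theory Num.Theory.
Local Open Scope ring_scope.

Definition is_argmin (R : realType) (g : R -> R) (x : R) : Prop :=
  forall y, g x <= g y.

Definition Hobj (R : realType) (d0 : measure_display) (T : measurableType d0)
  (P : probability T R) (theta : T -> R) (u : R -> R -> R) (phi : R -> R)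
  (pi0 pi2 p : R) (qb qc : R -> R -> R) (f : R) : R :=
  p * Rintegral P setT (fun w => let th := theta w in let q := qc f th in
        pi0 * q - u q th - pi2 * (f - q))
  + (1 - p) * Rintegral P setT (fun w => let th := theta w in let q := qb f th in
        pi0 * q - u q th + phi (f - q)).

From HB Require Import structures.
From mathcomp Require Import all_boot all_order all_algebra.
From mathcomp Require Import ring.
From mathcomp Require Import all_classical all_reals all_analysis.
Import Order.TTheory GRing.Theory Num.Theory.
Local Open Scope ring_scope.
Local Open Scope classical_set_scope.

Set Implicit Arguments.
Unset Strict Implicit.
Unset Printing Implicit Defensive.

(** A constant second derivative makes u(., th) and phi quadratic, so every
   argmin is an explicit affine function of the baseline f and of q^a(th).
   Substituting them back, the called value decreases at rate pi2 in f, while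
   the uncalled value equals f^2/(2(d+lam)) - f q^a(th)/(d+lam) up to a term
   independent of f.  Taking expectations, H is a quadratic in f with leading
   coefficient (1-p)/(2(d+lam)), and its vertex is
   E q^a + (d+lam) p pi2/(1-p). *)

Section quadratic_calculus.
Variable R : realType.

Lemma derive2_cst_quadratic (g : R -> R) (c : R) :
  (forall x, derivable g x 1) -> (forall x, derivable g^`() x 1) ->
  (forall x, (g^`())^`() x = c) ->
  forall x, g x = g 0 + derive1 g 0 * x + c / 2 * x ^+ 2.
Proof.
move=> dg dg' g''E.
(* [Dg] and [Dg'] are found as [is_derive] instances by [is_deriveB] and [is_derive_eq]. *)
have Dg (x : R) : is_derive x 1 g (derive1 g x).
  by rewrite derive1E; exact: derivableP (dg x).
have Dg' (x : R) : is_derive x 1 (derive1 g) c.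
  by rewrite -(g''E x) derive1E; exact: derivableP (dg' x).
have g'E (x : R) : derive1 g x = derive1 g 0 + c * x.
  have D (y : R) : is_derive y 1 (fun z => derive1 g z - c * z) 0.
    by rewrite -(subrr c) -[X in c - X]mulr1; apply: is_deriveB.
  by have := is_derive_0_is_cst x 0 D; rewrite mulr0 subr0 => <-; ring.
move=> x.
have D (y : R) : is_derive y 1 (fun z => g z - derive1 g 0 * z - c / 2 * (z * z)) 0.
  by apply: is_derive_eq; rewrite g'E /GRing.scale /=; field.
have := is_derive_0_is_cst x 0 D; rewrite !mulr0 !subr0 expr2 => <-; ring.
Qed.

Lemma quadratic_argmin (F : R -> R) (k a b x : R) : 0 < k ->
  (forall q, F q = k * q ^+ 2 + a * q + b) -> is_argmin F x -> x = - a / (2 * k).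
Proof.
move=> k_gt0 FE /(_ (- a / (2 * k))); rewrite !FE => Fmin.
have k_neq0 : k != 0 by rewrite gt_eqF.
have : k * (x + a / (2 * k)) ^+ 2 <= 0.
  suff -> : k * (x + a / (2 * k)) ^+ 2
    = k * x ^+ 2 + a * x + b - (k * (- a / (2 * k)) ^+ 2 + a * (- a / (2 * k)) + b).
    by rewrite subr_le0.
  by field.
rewrite pmulr_rle0 // le_eqVlt ltNge sqr_ge0 orbF sqrf_eq0 addr_eq0 => /eqP ->.
by rewrite mulNr.
Qed.

End quadratic_calculus.

Section quadratic_model.
Variables (R : realType) (u : R -> R -> R) (phi : R -> R) (A B : R -> R).
Variables (d lam pi0 pi2 : R).
Hypotheses (d_gt0 : 0 < d) (lam_gt0 : 0 < lam).
Hypothesis uE : forall th q, u q th = A th + B th * q - q ^+ 2 / (2 * d).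
Hypothesis phiE : forall x, phi x = x ^+ 2 / (2 * lam).

Definition baseline_cost (th q : R) := pi0 * q - u q th.
Definition called_cost (f th q : R) := pi0 * q - u q th - pi2 * (f - q).
Definition uncalled_cost (f th q : R) := pi0 * q - u q th + phi (f - q).

Let d_neq0 : d != 0. Proof. by rewrite gt_eqF. Qed.
Let lam_neq0 : lam != 0. Proof. by rewrite gt_eqF. Qed.
Let dlam_neq0 : d + lam != 0. Proof. by rewrite gt_eqF // addr_gt0. Qed.
Let inv2d_gt0 : 0 < 1 / (2 * d). Proof. by rewrite divr_gt0 // mulr_gt0. Qed.

Lemma baseline_argminE th x :
  is_argmin (baseline_cost th) x -> x = d * (B th - pi0).
Proof.
move=> /(quadratic_argmin (a := pi0 - B th) (b := - A th) inv2d_gt0) ->.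
- by field.
- by move=> q; rewrite /baseline_cost uE; field.
Qed.

Lemma called_argminE f th x :
  is_argmin (called_cost f th) x -> x = d * (B th - pi0 - pi2).
Proof.
move=> /(quadratic_argmin (a := pi0 - B th + pi2) (b := - A th - pi2 * f) inv2d_gt0) ->.
- by field.
- by move=> q; rewrite /called_cost uE; field.
Qed.

Lemma uncalled_argminE f th x :
  is_argmin (uncalled_cost f th) x -> x = (lam * d * (B th - pi0) + d * f) / (d + lam).
Proof.
have k_gt0 : 0 < 1 / (2 * d) + 1 / (2 * lam).
  by rewrite addr_gt0 // divr_gt0 // mulr_gt0.
move=> /(quadratic_argmin (a := pi0 - B th - f / lam)
          (b := - A th + f ^+ 2 / (2 * lam)) k_gt0) ->.
- by field; rewrite dlam_neq0 lam_neq0 d_neq0.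
- by move=> q; rewrite /uncalled_cost uE phiE; field; rewrite lam_neq0 d_neq0.
Qed.

Lemma called_cost_shift (qc : R -> R -> R) :
  (forall f th, is_argmin (called_cost f th) (qc f th)) ->
  forall f th, called_cost f th (qc f th) = called_cost 0 th (qc 0 th) + - (pi2 * f).
Proof.
move=> qcP f th.
by rewrite (called_argminE (qcP f th)) (called_argminE (qcP 0 th)) /called_cost; ring.
Qed.

Lemma uncalled_cost_shift (qa : R -> R) (qb : R -> R -> R) :
  (forall th, is_argmin (baseline_cost th) (qa th)) ->
  (forall f th, is_argmin (uncalled_cost f th) (qb f th)) ->
  forall f th, uncalled_cost f th (qb f th) =
    uncalled_cost 0 th (qb 0 th) + (f ^+ 2 / (2 * (d + lam)) + - (f / (d + lam)) * qa th).
Proof.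
move=> qaP qbP f th.
rewrite (uncalled_argminE (qbP f th)) (uncalled_argminE (qbP 0 th)).
rewrite (baseline_argminE (qaP th)) /uncalled_cost !uE !phiE.
by field; rewrite dlam_neq0 lam_neq0 d_neq0.
Qed.
End quadratic_model.

Section expectation.
Variables (R : realType) (d0 : measure_display) (T : measurableType d0).
Variable P : probability T R.

Lemma Rintegral_prob_cst (c : R) : Rintegral P setT (fun=> c) = c.
Proof.
rewrite Rintegral_cst // (_ : fine _ = 1) ?mulr1 //.
by rewrite -[1]/(fine 1%E); congr fine; exact: probability_setT.
Qed.

Lemma RintegralD_cst (X : T -> R) (c : R) : P.-integrable setT (EFin \o X) ->
  Rintegral P setT (fun w => X w + c) = Rintegral P setT X + c.
Proof.
move=> iX; rewrite RintegralD // ?Rintegral_prob_cst //.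
exact: finite_measure_integrable_cst.
Qed.

Lemma RintegralD_affine (X Y : T -> R) (a b : R) :
  P.-integrable setT (EFin \o X) -> P.-integrable setT (EFin \o Y) ->
  Rintegral P setT (fun w => X w + (a + b * Y w))
  = Rintegral P setT X + (a + b * Rintegral P setT Y).
Proof.
move=> iX iY; have ibY : P.-integrable setT (EFin \o (fun w => b * Y w)).
  apply: eq_integrable measurableT _ _ _ (integrableZl measurableT b iY).
  by move=> w _; rewrite /= EFinM.
transitivity (Rintegral P setT (fun w => (X w + b * Y w) + a)).
  by apply: eq_Rintegral => w _; ring.
rewrite RintegralD_cst; last first.
  apply: eq_integrable measurableT _ _ _ (integrableD measurableT iX ibY).
  by move=> w _; rewrite /= EFinD.
by rewrite RintegralD // RintegralZl //; ring.
Qed.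
End expectation.

Theorem theorem3 (R : realType) (d0 : measure_display) (T : measurableType d0)
  (P : probability T R) (theta : T -> R) (u : R -> R -> R) (phi : R -> R)
  (d lam pi0 pi2 p : R) (qa : R -> R) (qb qc : R -> R -> R) (fstar : R) :
  (* theta is a real random variable with a continuous (atomless) distribution *)
  measurable_fun setT theta ->
  (forall x : R, P (theta @^-1` [set x]) = 0%E) ->
  (* parameters *)
  0 < d -> 0 < lam -> 0 < pi0 -> 0 < pi2 -> 0 < p -> p < 1 ->
  (* u(q, th): twice differentiable in q with d^2u/dq^2 = -1/d *)
  (forall th q, derivable (fun x => u x th) q 1) ->
  (forall th q, derivable (fun x => u x th)^`() q 1) ->
  (forall th q, ((fun x => u x th)^`())^`() q = - d^-1) ->
  (* penalty phi: phi(0) = phi'(0) = 0, symmetric, phi'' = 1/lam *)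
  (forall x, derivable phi x 1) ->
  (forall x, derivable phi^`() x 1) ->
  (forall x, (phi^`())^`() x = lam^-1) ->
  phi 0 = 0 -> phi^`() 0 = 0 ->
  (forall x, phi (- x) = phi x) ->
  (* the argmins q^a, q^b, q^c *)
  (forall th, is_argmin (fun q => pi0 * q - u q th) (qa th)) ->
  (forall f th, is_argmin (fun q => pi0 * q - u q th + phi (f - q)) (qb f th)) ->
  (forall f th, is_argmin (fun q => pi0 * q - u q th - pi2 * (f - q)) (qc f th)) ->
  (* the expectations involved are finite *)
  P.-integrable setT (fun w => (qa (theta w))%:E) ->
  (forall f, P.-integrable setT (fun w => (let th := theta w in let q := qc f th in
        pi0 * q - u q th - pi2 * (f - q))%:E)) ->
  (forall f, P.-integrable setT (fun w => (let th := theta w in let q := qb f th in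
        pi0 * q - u q th + phi (f - q))%:E)) ->
  (* fstar minimizes H *)
  (forall f, Hobj P theta u phi pi0 pi2 p qb qc fstar
             <= Hobj P theta u phi pi0 pi2 p qb qc f) ->
  fstar - Rintegral P setT (fun w => qa (theta w)) = (d + lam) * (p * pi2 / (1 - p)).
Proof.
move=> _ _ d_gt0 lam_gt0 _ _ _ p_lt1 du1 du2 du3 dphi1 dphi2 dphi3 phi0 dphi0 _
  qaP qbP qcP iqa iVc iVb fstar_min.
have [A [B uE]] : exists A B : R -> R,
    forall th q, u q th = A th + B th * q - q ^+ 2 / (2 * d).
  exists (u 0), (fun th => derive1 (u^~ th) 0) => th q.
  by rewrite (derive2_cst_quadratic (du1 th) (du2 th) (du3 th) q); field; rewrite gt_eqF.
have phiE x : phi x = x ^+ 2 / (2 * lam).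
  by rewrite (derive2_cst_quadratic dphi1 dphi2 dphi3) phi0 dphi0; field; rewrite gt_eqF.
have dlam_gt0 : 0 < d + lam by rewrite addr_gt0.
pose Vc f w := called_cost u pi0 pi2 f (theta w) (qc f (theta w)).
pose Vb f w := uncalled_cost u phi pi0 f (theta w) (qb f (theta w)).
set E := Rintegral P setT (fun w => qa (theta w)).
have HobjE f : Hobj P theta u phi pi0 pi2 p qb qc f =
    (1 - p) / (2 * (d + lam)) * f ^+ 2 + (- (p * pi2) - (1 - p) / (d + lam) * E) * f
    + (p * Rintegral P setT (Vc 0) + (1 - p) * Rintegral P setT (Vb 0)).
  rewrite [LHS](_ : _ = p * Rintegral P setT (Vc f) + (1 - p) * Rintegral P setT (Vb f)) //.
  rewrite (eq_Rintegral P (fun w _ => called_cost_shift d_gt0 uE qcP f (theta w))).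
  rewrite (eq_Rintegral P (fun w _ => uncalled_cost_shift d_gt0 lam_gt0 uE phiE qaP qbP f (theta w))).
  rewrite (RintegralD_cst (X := Vc 0)); last exact: iVc.
  rewrite (RintegralD_affine (X := Vb 0) (Y := fun w => qa (theta w))) //; last exact: iVb.
  by rewrite -/E; field; rewrite gt_eqF.
have p1_gt0 : 0 < 1 - p by rewrite subr_gt0.
have k_gt0 : 0 < (1 - p) / (2 * (d + lam)) by rewrite divr_gt0 // mulr_gt0.
rewrite (quadratic_argmin k_gt0 HobjE fstar_min).
by field; rewrite (gt_eqF p1_gt0) (gt_eqF dlam_gt0).
Qed.
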